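(* Let $B',B\in\mathcal X_{N-2}$ with $B'\preceq B$. If $B\in\mathcal X^+_{N-2}$, then $B'\in\mathcal X^+_{N-2}$.
   Context: Let $N\ge 3$ be an odd integer and $F=\mathbb Z/2\mathbb Z$. For integers $i,j$ let $[i,j]=\{h\in\mathbb Z: i\le h\le j\}$ (empty if $i>j$). Let $S_N=[1,N]$. The set of all subsets of $S_N$ is an $F$-vector space with sum $X+X'=(X\cup X')-(X\cap X')$; let $E_N$ be the subspace of subsets of even cardinality. A $2$-element subset $\{i,j\}\subseteq S_N$ is written $ij$ when either ($i<j$ and $j-i$ odd) or ($i>j$ and $i-j$ even); each $2$-element subset has exactly one such writing. Let $\mathcal P_N$ be the set of all finite sets $B$ of pairwise disjoint $2$-element subsets of $S_N$; for $B\in\mathcal P_N$ let $\langle B\rangle$ be the $F$-subspace of $E_N$ spanned by the elements of $B$, $\mathrm{supp}(B)=\bigcup_{X\in B}X$, $B^0=\{\{i,j\}\in B: i-j\text{ even}\}$, $B^1=\{\{i,j\}\in B: i-j\text{ odd}\}$. A set $X\subseteq S_N$ is $0$-covered (resp. $1$-covered) by $B^1$ if there are $a_1b_1,\dots,a_sb_s\in B^1$ ($s\ge 0$, so $a_r<b_r$) with $X=[a_1,b_1]\sqcup\dots\sqcup[a_s,b_s]$ (resp. $X=[a_1,b_1]\sqcup\dots\sqcup[a_s,b_s]\sqcup\{u\}$ for some $u$), disjoint unions. Let ${}^*\mathcal P_N$ be the set of $B\in\mathcal P_N$ such that: for every $ij\in B^1$ the set $[i+1,j-1]$ is $0$-covered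 by $B^1$; and there is a sequence $i_*(B)=(i_1,\dots,i_{2s})$ in $S_N$ with $B^0=\{i_{2s}i_1,i_{2s-1}i_2,\dots,i_{s+1}i_s\}$ (so $s=|B^0|$; the sequence is unique) such that, if $s\ge1$, each of $[i_1+1,i_2-1],\dots,[i_{s-1}+1,i_s-1],[i_{s+1}+1,i_{s+2}-1],\dots,[i_{2s-1}+1,i_{2s}-1]$ is $0$-covered by $B^1$. For $B\in{}^*\mathcal P_N$ with $i_*(B)=(i_1,\dots,i_{2s})$ consider: (I) $s=0$, or $s\ge1$ and $[1,i_1-1]$ and $[i_{2s}+1,N]$ are $0$-covered by $B^1$; (II) $N\notin\mathrm{supp}(B)$ and either $s=0$, or $s$ is odd and either (i) $[1,i_1-1]$ is $1$-covered and $[i_{2s}+1,N-1]$ is $0$-covered by $B^1$, or (ii) $[1,i_1-1]$ is $0$-covered and $[i_{2s}+1,N-1]$ is $1$-covered by $B^1$; (III) (I) holds and, if $s$ is even then $\{i,N\}\in B$ for some even $i$, if $s$ is odd then $\{i,N\}\in B$ for some odd $i$. Let $\mathcal X^+_{N-2}$, $\mathcal X^-_{N-2}$ be the sets of $B\in{}^*\mathcal P_N$ satisfying (II), (III) respectively, and $\mathcal X_{N-2}=\mathcal X^+_{N-2}\sqcup\mathcal X^-_{N-2}$. For $B\in\mathcal X^+_{N-2}$ with $s\ge1$ there is a unique $u_B$: in case (i), $u_B\in[1,i_1-1]$ with $[1,u_B-1]$, $[u_B+1,i_1-1]$ $0$-covered by $B^1$ ($u_B$ odd); in case (ii), $u_B\in[i_{2s}+1,N-1]$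 with $[i_{2s}+1,u_B-1]$, $[u_B+1,N-1]$ $0$-covered by $B^1$ ($u_B$ even). Put $[[ij]]=[i,j]$ if $i<j$ and $[[ij]]=[i,N]\cup[1,j]$ if $i>j$. For $B\in\mathcal X_{N-2}$ define ${}'\epsilon(B)\in E_N$: ${}'\epsilon(B)=\sum_{ij\in B}[[ij]]$ if $B\in\mathcal X^-_{N-2}$ or if $B\in\mathcal X^+_{N-2}$ with $|B^0|=0$; ${}'\epsilon(B)=\sum_{ij\in B}[[ij]]+[u_B,N]$ if $B\in\mathcal X^+_{N-2}$, $|B^0|$ odd, $u_B$ even; ${}'\epsilon(B)=\sum_{ij\in B}[[ij]]+\{N\}+[1,u_B]$ if $B\in\mathcal X^+_{N-2}$, $|B^0|$ odd, $u_B$ odd. For $B,B'\in\mathcal X_{N-2}$ write $B'\preceq B$ if there is a sequence $B'=B_0,\dots,B_h=B$ ($h\ge0$) in $\mathcal X_{N-2}$ with ${}'\epsilon(B_k)\in\langle B_{k+1}\rangle$ for $k=0,\dots,h-1$. *)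

(* Elements of S_N = [1,N] are the ordinals of 'I_N.+1 with
   nonzero value; value 0 is never used. *)
From HB Require Import structures.
From mathcomp Require Import all_boot all_order.
Set Implicit Arguments. Unset Strict Implicit. Unset Printing Implicit Defensive.

Section Defs.
Variable N : nat.
Local Notation T := 'I_N.+1.

(* sum in the F_2-vector space of subsets: symmetric difference *)
Definition symd (A B : {set T}) : {set T} := (A :\: B) :|: (B :\: A).

Lemma symdA : associative symd.
Proof.
move=> A B C; apply/setP=> x; rewrite !inE.
by case: (x \in A); case: (x \in B); case: (x \in C).
Qed.
Lemma symdC : commutative symd.
Proof. by move=> A B; apply/setP=> x; rewrite !inE orbC. Qed.
Lemma sym0d : left_id set0 symd.
Proof. by move=> A; apply/setP=> x; rewrite !inE; case: (x \in A). Qed.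

End Defs.

HB.instance Definition _ (N : nat) :=
  Monoid.isComLaw.Build {set 'I_N.+1} set0 (@symd N) (@symdA N) (@symdC N) (@sym0d N).

Section Defs2.
Variable N : nat.
Local Notation T := 'I_N.+1.

Definition SN : {set T} := [set h : T | 0 < h].

Definition itv (i j : nat) : {set T} := [set h : T | [&& 0 < h, i <= h & h <= j]].

(* the 2-element subset {i,j} is written "ij" *)
Definition writ (i j : nat) : bool :=
  ((i < j) && odd (j - i)) || ((j < i) && ~~ odd (i - j)).

Definition PN (B : {set {set T}}) : Prop :=
  (forall X, X \in B -> X \subset SN /\ #|X| = 2) /\
  (forall X Y, X \in B -> Y \in B -> X != Y -> [disjoint X & Y]).

Definition inB (B : {set {set T}}) (i j : T) : bool := ([set i; j] \in B) && writ i j.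
Definition inB1 (B : {set {set T}}) (i j : T) : bool := inB B i j && odd (j - i).
Definition inB0 (B : {set {set T}}) (i j : T) : bool := [&& inB B i j, j < i & ~~ odd (i - j)].

Definition supp (B : {set {set T}}) : {set T} := \bigcup_(X in B) X.

Definition B1union (B : {set {set T}}) (P : {set T * T}) : bool :=
  [forall p in P, inB1 B p.1 p.2] &&
  [forall p in P, forall q in P,
      (p != q) ==> [disjoint itv p.1 p.2 & itv q.1 q.2]].

Definition cov0 (B : {set {set T}}) (X : {set T}) : Prop :=
  exists P : {set T * T}, B1union B P /\ X = \bigcup_(p in P) itv p.1 p.2.

Definition cov1 (B : {set {set T}}) (X : {set T}) : Prop :=
  exists (P : {set T * T}) (u : T), B1union B P /\
    u \notin \bigcup_(p in P) itv p.1 p.2 /\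
    X = (\bigcup_(p in P) itv p.1 p.2) :|: [set u].

(* i_k of the sequence s = (i_1, ..., i_{2s}), 1-based *)
Definition ik (s : seq nat) (k : nat) : nat := nth 0 s k.-1.
Definition hs (s : seq nat) : nat := (size s)./2.

Definition is_iseq (B : {set {set T}}) (s : seq nat) : Prop :=
  sorted ltn s /\ all (fun x => 0 < x <= N) s /\ ~~ odd (size s) /\
  (forall i j : T, inB0 B i j <->
     exists2 k, 1 <= k <= hs s & (nat_of_ord i = ik s ((size s).+1 - k) /\
                                  nat_of_ord j = ik s k)).

Definition starP_with (B : {set {set T}}) (s : seq nat) : Prop :=
  PN B /\
  (forall i j : T, inB1 B i j -> cov0 B (itv i.+1 j.-1)) /\
  is_iseq B s /\
  (forall k, 1 <= k < size s -> k != hs s ->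
     cov0 B (itv (ik s k).+1 (ik s k.+1).-1)).

Definition condI (B : {set {set T}}) (s : seq nat) : Prop :=
  hs s = 0 \/
  (cov0 B (itv 1 (ik s 1).-1) /\ cov0 B (itv (ik s (size s)).+1 N)).

Definition caseI (B : {set {set T}}) (s : seq nat) : Prop :=
  cov1 B (itv 1 (ik s 1).-1) /\ cov0 B (itv (ik s (size s)).+1 N.-1).
Definition caseII (B : {set {set T}}) (s : seq nat) : Prop :=
  cov0 B (itv 1 (ik s 1).-1) /\ cov1 B (itv (ik s (size s)).+1 N.-1).

Definition condII (B : {set {set T}}) (s : seq nat) : Prop :=
  (ord_max : T) \notin supp B /\
  (hs s = 0 \/ (odd (hs s) /\ (caseI B s \/ caseII B s))).

Definition condIII (B : {set {set T}}) (s : seq nat) : Prop :=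
  condI B s /\
  (~~ odd (hs s) -> exists i : T, ~~ odd i /\ [set i; ord_max] \in B) /\
  (odd (hs s) -> exists i : T, odd i /\ [set i; ord_max] \in B).

Definition Xplus (B : {set {set T}}) : Prop :=
  exists s, starP_with B s /\ condII B s.
Definition Xminus (B : {set {set T}}) : Prop :=
  exists s, starP_with B s /\ condIII B s.
Definition inX (B : {set {set T}}) : Prop := Xplus B \/ Xminus B.

Definition uB_spec (B : {set {set T}}) (s : seq nat) (u : nat) : Prop :=
  (caseI B s /\ 1 <= u <= (ik s 1).-1 /\
     cov0 B (itv 1 u.-1) /\ cov0 B (itv u.+1 (ik s 1).-1)) \/
  (caseII B s /\ (ik s (size s)).+1 <= u <= N.-1 /\
     cov0 B (itv (ik s (size s)).+1 u.-1) /\ cov0 B (itv u.+1 N.-1)).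

Definition brk (i j : nat) : {set T} :=
  if i < j then itv i j else itv i N :|: itv 1 j.

Definition sumbrk (B : {set {set T}}) : {set T} :=
  \big[@symd N/set0]_(p : T * T | inB B p.1 p.2) brk p.1 p.2.

Definition eps (B : {set {set T}}) (Y : {set T}) : Prop :=
  (Xminus B /\ Y = sumbrk B) \/
  (exists s, starP_with B s /\ condII B s /\ hs s = 0 /\ Y = sumbrk B) \/
  (exists s u, starP_with B s /\ condII B s /\ odd (hs s) /\ uB_spec B s u /\
     ((~~ odd u /\ Y = symd (sumbrk B) (itv u N)) \/
      (odd u /\ Y = symd (symd (sumbrk B) [set ord_max]) (itv 1 u)))).

Definition span (B : {set {set T}}) : {set {set T}} :=
  [set \big[@symd N/set0]_(X in C) X | C : {set {set T}} in powerset B].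

Definition preceq (B' B : {set {set T}}) : Prop :=
  exists (h : nat) (f : nat -> {set {set T}}),
    f 0 = B' /\ f h = B /\ (forall k, k <= h -> inX (f k)) /\
    (forall k, k < h -> exists Y, eps (f k) Y /\ Y \in span (f k.+1)).

End Defs2.

From HB Require Import structures.
From mathcomp Require Import all_boot all_order zify.
Set Implicit Arguments. Unset Strict Implicit. Unset Printing Implicit Defensive.

(* Every element of <B> is a sum of members of B, so it avoids the point N
   when N is not in supp B, as is the case for B in X^+. For B in X^-, on the
   other hand, N lies in 'eps(B) = sum of the [[ij]]: N is in [[ij]] exactly
   when ij is one of the s pairs of B^0 or a pair iN of B^1, and by (III) such
   a pair iN exists exactly when s is even, so N is covered an odd number of
   times. Hence 'eps(B_k) in <B_(k+1)> with B_(k+1) in X^+ forces B_k into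
   X^+, and X^+ propagates down the chain from B to B'. *)

Section Xplus_closed.
Variable N : nat.
Local Notation T := 'I_N.+1.
Local Notation Nmax := (ord_max : T).

Lemma mem_symd_big (I : finType) (P : pred I) (F : I -> {set T}) (x : T) :
  (x \in \big[@symd N/set0]_(i | P i) F i) = odd #|[set i | P i && (x \in F i)]|.
Proof.
rewrite -sum1dep_card big_mkcondr /=.
rewrite (big_morph (fun A : {set T} => x \in A) (id1 := false) (op1 := addb)); last first.
- by rewrite inE.
- by move=> A B; rewrite !inE; case: (x \in A); case: (x \in B).
rewrite (big_morph odd (id1 := false) (op1 := addb)) //; last by move=> a b; rewrite oddD.
by apply: eq_bigr => i _; case: (x \in F i).
Qed.

Lemma notin_span (B : {set {set T}}) (x : T) (Y : {set T}) :
  x \notin supp B -> Y \in span B -> x \notin Y.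
Proof.
move=> xB /imsetP[C]; rewrite inE => /subsetP sCB ->.
rewrite mem_symd_big; apply/negP; rewrite (_ : [set _ | _] = set0) ?cards0 //.
apply/setP => X; rewrite !inE; apply/andP => -[XC xX]; apply/negP: xB; apply/negPn.
by apply/bigcupP; exists X; first exact: sCB.
Qed.

Lemma writ_neq (i j : nat) : writ i j -> i != j.
Proof. by rewrite /writ => /orP[] /andP[ltij _]; rewrite ?(ltn_eqF ltij) // eq_sym ltn_eqF. Qed.

Lemma writ_max (i : T) : odd N -> writ i Nmax = ~~ odd i.
Proof.
move=> oddN; have := ltn_ord i; rewrite /writ /= ltnS => leiN.
rewrite [N < i]ltnNge leiN /= orbF ltn_neqAle leiN andbT oddB // oddN.
by case: eqP => [->|]; rewrite ?oddN.
Qed.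

Lemma mem_brk_max (i j : T) :
  0 < N -> writ i j -> (Nmax \in brk N i j) = (j == Nmax) || (j < i).
Proof.
move=> N_gt0 wij; have := ltn_ord i; have := ltn_ord j; rewrite /brk !ltnS.
case: ltnP => [ltij | leji] lejN leiN.
- rewrite !inE N_gt0 -val_eqE /= [j < i]ltnNge (ltnW ltij) orbF.
  by rewrite (leq_trans (ltnW ltij) lejN) eqn_leq lejN.
- have ltji : j < i by rewrite ltn_neqAle eq_sym writ_neq // leji.
  by rewrite ltji orbT !inE N_gt0 leqnn leiN.
Qed.

Lemma PN_pair_neq (B : {set {set T}}) (a b : T) : PN B -> [set a; b] \in B -> a != b.
Proof. by move=> [cardB _] /cardB[_]; rewrite cards2; case: (a != b). Qed.

Lemma PN_partner_unique (B : {set {set T}}) (a b m : T) :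
  PN B -> [set a; m] \in B -> [set b; m] \in B -> a = b.
Proof.
move=> PNB aB bB; have [E|neab] := eqVneq [set a; m] [set b; m].
  have : a \in [set b; m] by rewrite -E !inE eqxx.
  by rewrite !inE (negbTE (PN_pair_neq PNB aB)) orbF => /eqP.
have /disjoint_setI0/setP/(_ m) := PNB.2 _ _ aB bB neab.
by rewrite !inE !eqxx !orbT.
Qed.

Lemma card_inB0 (B : {set {set T}}) (s : seq nat) :
  is_iseq B s -> #|[set p : T * T | inB0 B p.1 p.2]| = hs s.
Proof.
move=> [sorted_s [bound_s [_ B0E]]].
have uniq_s : uniq s by apply: (sorted_uniq ltn_trans ltnn).
have le_nth k : k < size s -> nth 0 s k < N.+1.
  by move=> ks; have /allP/(_ _ (mem_nth 0 ks))/andP[_] := bound_s.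
have hs_le : hs s <= size s by rewrite /hs -{2}(odd_double_half (size s)) -addnn; lia.
have lt_size (k : 'I_(hs s)) : k < size s := leq_trans (ltn_ord k) hs_le.
have lt_size_rev (k : 'I_(hs s)) : size s - k.+1 < size s.
  by rewrite ltn_subrL (leq_ltn_trans _ (lt_size k)).
pose f (k : 'I_(hs s)) : T * T :=
  (inord (nth 0 s (size s - k.+1)), inord (nth 0 s k)).
have f_inj : injective f.
  move=> a b [_ /(congr1 val)]; rewrite /= !inordK ?le_nth //.
  by move/eqP; rewrite nth_uniq // => /eqP/val_inj.
suff -> : [set p : T * T | inB0 B p.1 p.2] = f @: setT.
  by rewrite card_imset // cardsT card_ord.
apply/setP => -[i j]; rewrite inE /=; apply/idP/imsetP.
- move/B0E => [k /andP[k_gt0 k_le] [ei ej]].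
  have lt_k : k.-1 < hs s by rewrite prednK.
  have lt_k_size : k.-1 < size s := lt_size (Ordinal lt_k).
  exists (Ordinal lt_k) => //; rewrite /f /=.
  congr (_, _); apply: val_inj; rewrite /= ?ei ?ej /ik inordK ?le_nth //; last first.
    by rewrite ltn_subrL (leq_ltn_trans _ lt_k_size).
  by congr nth; lia.
- move=> [k _ [-> ->]]; apply/B0E; exists k.+1; first by rewrite /= ltn_ord.
  by rewrite /ik /= !inordK ?le_nth // subSS subnS.
Qed.

Lemma card_pairs_to_max (B : {set {set T}}) (i : T) :
  odd N -> PN B -> [set i; Nmax] \in B ->
  #|[set p : T * T | inB B p.1 p.2 && (p.2 == Nmax)]| = ~~ odd i.
Proof.
move=> oddN PNB iB.
suff -> : [set p : T * T | inB B p.1 p.2 && (p.2 == Nmax)] =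
          if ~~ odd i then [set (i, Nmax)] else set0.
  by case: ifP => _; rewrite ?cards1 ?cards0.
apply/setP => -[a b]; rewrite inE /= /inB.
have [->|neb] := eqVneq b Nmax; last first.
  by rewrite andbF; case: ifP; rewrite ?inE // xpair_eqE (negbTE neb) andbF.
rewrite andbT writ_max //; case: (boolP ([set a; Nmax] \in B)) => aB /=.
  rewrite (PN_partner_unique PNB aB iB).
  by case: ifP => _; rewrite ?inE ?eqxx.
case: ifP => _; rewrite ?inE // xpair_eqE eqxx andbT.
by apply/esym/negP => /eqP eai; rewrite eai iB in aB.
Qed.

Lemma Nmax_in_sumbrk (B : {set {set T}}) : 0 < N -> odd N -> Xminus B -> Nmax \in sumbrk B.
Proof.
move=> N_gt0 oddN [s [[PNB [_ [iseq_s _]]] [_ [even_s odd_s]]]].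
set B0 := [set p : T * T | inB0 B p.1 p.2].
set toN := [set p : T * T | inB B p.1 p.2 && (p.2 == Nmax)].
have brk_pairs : [set p : T * T | inB B p.1 p.2 && (Nmax \in brk N p.1 p.2)] = B0 :|: toN.
  apply/setP => -[i j]; rewrite !inE /= /inB0.
  case ij: (inB B i j) => //=; have /andP[_ wij] := ij.
  rewrite mem_brk_max // orbC; congr (_ || _).
  by case: (ltnP j i) wij => [ltji | _] //; rewrite /writ [i < j]ltnNge (ltnW ltji) ltji /=.
have disj : [disjoint B0 & toN].
  rewrite -setI_eq0; apply/eqP/setP => -[a b]; rewrite !inE /= /inB0.
  by apply/negP => /andP[/and3P[_ ltba _] /andP[_ /eqP ej]]; move: ltba; rewrite ej ltnNge -ltnS ltn_ord.
rewrite /sumbrk mem_symd_big brk_pairs cardsU (disjoint_setI0 disj) cards0 subn0 (card_inB0 iseq_s).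
have [odd_hs | even_hs] := boolP (odd (hs s)).
- have [i [odd_i iB]] := odd_s odd_hs.
  by rewrite (card_pairs_to_max oddN PNB iB) odd_i addn0.
- have [i [even_i iB]] := even_s even_hs.
  by rewrite (card_pairs_to_max oddN PNB iB) even_i addn1 /= even_hs.
Qed.

Lemma Xplus_of_eps_in_span (B1 B2 : {set {set T}}) (Y : {set T}) :
  0 < N -> odd N -> Xplus B2 -> eps B1 Y -> Y \in span B2 -> Xplus B1.
Proof.
move=> N_gt0 oddN [s2 [_ [Nmax_notin _]]].
case=> [[B1minus ->]|[[s [B1s [B1II _]]]|[s [u [B1s [B1II _]]]]]] spanY; try by exists s.
by have := notin_span Nmax_notin spanY; rewrite Nmax_in_sumbrk.
Qed.

End Xplus_closed.

Lemma downward_ind (P : nat -> Prop) (h : nat) :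
  P h -> (forall k, k < h -> P k.+1 -> P k) -> P 0.
Proof.
move=> Ph IH; suff /(_ h (leqnn h)) : forall m, m <= h -> P (h - m) by rewrite subnn.
elim=> [_|m IHm le_mh]; first by rewrite subn0.
have e : h - m = (h - m.+1).+1 by lia.
by apply: IH; [lia | rewrite -e; apply: IHm; lia].
Qed.

Theorem mainTheorem5 (N : nat) (HN3 : 3 <= N) (HNodd : odd N)
  (B' B : {set {set 'I_N.+1}}) :
  inX B' -> inX B -> preceq B' B -> Xplus B -> Xplus B'.
Proof.
move=> _ _ [h [f [<- [fh [_ steps]]]]] XB.
have N_gt0 : 0 < N by apply: leq_trans HN3.
apply: (@downward_ind (fun k => Xplus (f k)) h); first by rewrite fh.
move=> k lt_kh Xfk1; have [Y [epsY spanY]] := steps k lt_kh.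
exact: Xplus_of_eps_in_span N_gt0 HNodd Xfk1 epsY spanY.
Qed.
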